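(* Let $\Gamma$ be a non-empty set and $1<p\le 2$. Then $FBL[\ell_p(\Gamma)]$ contains a closed subspace isomorphic to $\ell_1(\Gamma)$.
   Context: For a real Banach space $E$ with dual $E^*$ and closed unit ball $B_E$, let $H[E]$ be the vector space of all positively homogeneous functions $f:E^*\to\mathbb R$ ($f(\lambda x^* )=\lambda f(x^* )$ for $\lambda>0$). For $f\in H[E]$ put $\|f\|_{FBL[E]}:=\sup\{\sum_{k=1}^n|f(x_k^* )| : n\in\mathbb N,\ x_1^*,\dots,x_n^*\in E^*,\ \sup_{x\in B_E}\sum_{k=1}^n|x_k^*(x)|\le 1\}$. $H_0[E]:=\{f\in H[E]:\|f\|_{FBL[E]}<\infty\}$ is a Banach lattice with this norm and pointwise order/operations. For $x\in E$ let $\delta_x(x^* )=x^*(x)$. $FBL[E]$ is the closed sublattice of $H_0[E]$ generated by $\{\delta_x:x\in E\}$. *)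

From HB Require Import structures.
From mathcomp Require Import all_boot all_order all_algebra.
From mathcomp Require Import all_classical all_reals all_analysis.
Set Implicit Arguments. Unset Strict Implicit. Unset Printing Implicit Defensive.
Import Order.TTheory GRing.Theory Num.Theory.
Local Open Scope classical_set_scope.
Local Open Scope ring_scope.

Section FBL.
Context {R : realType} {G : choiceType}.

(* Elements of E = l_p(G) are functions G -> R with sum_g |x g|^p finite. *)
Definition lp_sum (p : R) (x : G -> R) (s : seq G) : R :=
  \sum_(g <- s) (`|x g| `^ p).

Definition in_lp (p : R) (x : G -> R) : Prop :=
  exists M : R, forall s : seq G, uniq s -> lp_sum p x s <= M.

Definition in_lp_ball (p : R) (x : G -> R) : Prop :=
  forall s : seq G, uniq s -> lp_sum p x s <= 1.

(* Elements of the dual E^* : bounded linear functionals on l_p(G),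
   represented canonically as functions on G -> R vanishing outside l_p(G). *)
Definition is_dual_lp (p : R) (phi : (G -> R) -> R) : Prop :=
  [/\ (forall x y, in_lp p x -> in_lp p y ->
         phi (fun g => x g + y g) = phi x + phi y),
      (forall (a : R) x, in_lp p x -> phi (fun g => a * x g) = a * phi x),
      (exists C : R, forall x, in_lp_ball p x -> `|phi x| <= C) &
      (forall x, ~ in_lp p x -> phi x = 0)].

Definition admissible (p : R) (xs : seq ((G -> R) -> R)) : Prop :=
  (forall phi, phi \in xs -> is_dual_lp p phi) /\
  (forall x, in_lp_ball p x -> \sum_(phi <- xs) `|phi x| <= 1).

Definition fbl_norm (p : R) (f : ((G -> R) -> R) -> R) : \bar R :=
  ereal_sup [set (\sum_(phi <- xs) `|f phi|)%:E | xs in admissible p].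

Definition pos_homog (p : R) (f : ((G -> R) -> R) -> R) : Prop :=
  forall phi, is_dual_lp p phi ->
    forall l : R, 0 < l -> f (fun x => l * phi x) = l * f phi.

Definition in_H0 (p : R) (f : ((G -> R) -> R) -> R) : Prop :=
  pos_homog p f /\ (fbl_norm p f < +oo)%E.

Definition delta (x : G -> R) : ((G -> R) -> R) -> R := fun phi => phi x.

Definition closed_sublattice_with_deltas (p : R)
    (S : set (((G -> R) -> R) -> R)) : Prop :=
  (forall f, S f -> in_H0 p f) /\
  [/\ (forall x, in_lp p x -> S (delta x)),
      (forall f g, S f -> S g -> S (fun phi => f phi + g phi)),
      (forall (a : R) f, S f -> S (fun phi => a * f phi)),
      (forall f g, S f -> S g -> S (fun phi => Num.max (f phi) (g phi))) &
      (forall f, in_H0 p f ->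
         (forall e : R, 0 < e -> exists g, S g /\
            (fbl_norm p (fun phi => (f phi - g phi)%R) <= e%:E)%E) -> S f)].

Definition FBL (p : R) : set (((G -> R) -> R) -> R) :=
  [set f | forall S, closed_sublattice_with_deltas p S -> S f].

Definition l1_norm (a : G -> R) : \bar R :=
  ereal_sup [set (\sum_(g <- s) `|a g|)%:E | s in [set s : seq G | uniq s]].

Definition in_l1 (a : G -> R) : Prop := (l1_norm a < +oo)%E.

End FBL.

From HB Require Import structures.
From mathcomp Require Import all_boot all_order all_algebra.
From mathcomp Require Import all_classical all_reals all_analysis.
From mathcomp Require Import ring lra.
Set Implicit Arguments. Unset Strict Implicit. Unset Printing Implicit Defensive.
Import Order.TTheory GRing.Theory Num.Theory.
Local Open Scope classical_set_scope.
Local Open Scope ring_scope.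

(* The embedding sends a in l_1(G) to [\sum_g a g * |delta_(e_g)|], a norm limit
   of finite lattice expressions in the delta_x, hence an element of FBL[l_p(G)].
   As each |delta_(e_g)| has norm 1, its FBL norm is at most the l_1 norm of a.
   Conversely, split a finite part of the support of a into the sets J where a
   is nonnegative, resp. negative.  For each J, the 2^|J| Rademacher functionals
   [2^-(|J|+1) \sum_(g in J) eps_g e_g^*] have total weight at most 1/2 on the
   unit ball of l_p, by Cauchy-Schwarz and |x|_2 <= |x|_p (this is where p <= 2
   is used); on the image of a they sum to |\sum_(g in J) a g| / 2, which is
   [\sum_(g in J) |a g| / 2] since a has constant sign on J. *)

Lemma sum_norm_sign_split (R : realDomainType) (T : Type) (s : seq T) (F : T -> R) :
  \sum_(t <- s) `|F t| = `|\sum_(t <- s | 0 <= F t) F t| + `|\sum_(t <- s | F t < 0) F t|.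
Proof.
rewrite (bigID (fun t => 0 <= F t)) /=; congr (_ + _).
  by rewrite ger0_norm ?sumr_ge0 //; apply: eq_bigr => t /ger0_norm.
rewrite ler0_norm ?sumr_le0 // => [|t /ltW //].
rewrite -sumrN; apply: eq_big => [t|t]; first by rewrite ltNge.
by rewrite -ltNge => /ltr0_norm.
Qed.

Section SumOverSigns.
Variable R : realFieldType.

Fixpoint sum_over_signs (F : R -> R) (xs : seq R) (c : R) : R :=
  if xs is x :: xs' then sum_over_signs F xs' (c + x) + sum_over_signs F xs' (c - x)
  else F c.

Lemma sum_over_signs_sqr xs c :
  sum_over_signs (fun t => t ^+ 2) xs c = 2 ^+ size xs * (c ^+ 2 + \sum_(x <- xs) x ^+ 2).
Proof.
elim: xs c => [|x xs IH] c /=; first by rewrite big_nil expr0 mul1r addr0.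
by rewrite !IH big_cons [2 ^+ (size xs).+1]exprS; ring.
Qed.

Lemma sum_over_signs_ge0 F xs c : (forall t, 0 <= F t) -> 0 <= sum_over_signs F xs c.
Proof. by move=> F_ge0; elim: xs c => [|x xs IH] c /=; rewrite ?addr_ge0. Qed.

Lemma sum_over_signs_norm_sqr xs c :
  sum_over_signs Num.norm xs c ^+ 2 <= 2 ^+ size xs * sum_over_signs (fun t => t ^+ 2) xs c.
Proof.
elim: xs c => [|x xs IH] c /=; first by rewrite expr0 mul1r real_normK ?num_real.
set A := sum_over_signs Num.norm xs (c + x); set B := sum_over_signs Num.norm xs (c - x).
apply: (@le_trans _ _ (2 * (A ^+ 2 + B ^+ 2))).
  have -> : (A + B) ^+ 2 = 2 * (A ^+ 2 + B ^+ 2) - (A - B) ^+ 2 by ring.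
  by rewrite gerBl sqr_ge0.
by rewrite [2 ^+ (size xs).+1]exprS -mulrA ler_wpM2l // mulrDr lerD ?IH.
Qed.

Lemma sum_over_signs_norm_le xs :
  \sum_(x <- xs) x ^+ 2 <= 1 -> sum_over_signs Num.norm xs 0 <= 2 ^+ size xs.
Proof.
move=> sq_le1; have S_ge0 := sum_over_signs_ge0 xs 0 (fun t => normr_ge0 t).
rewrite -(@ler_pXn2r _ 2) // ?nnegrE ?exprn_ge0 //.
apply: (le_trans (sum_over_signs_norm_sqr _ _)).
rewrite sum_over_signs_sqr expr0n /= add0r mulrA -expr2.
by rewrite ler_piMr ?exprn_ge0.
Qed.

End SumOverSigns.

Section L1EmbeddingInFBL.
Context {R : realType} {G : choiceType}.
Variable p : R.
Hypothesis p_ge1 : 1 <= p.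
Implicit Types (a b x z : G -> R) (s gs : seq G) (phi : (G -> R) -> R).

Lemma p_gt0 : 0 < p. Proof. exact: lt_le_trans ltr01 p_ge1. Qed.

Lemma in_lp0 : in_lp p (fun _ : G => 0).
Proof.
by exists 0 => s _; rewrite /lp_sum big1 // => g _; rewrite normr0 powR0 // gt_eqF ?p_gt0.
Qed.

Lemma in_lpZ x (c : R) : in_lp p x -> in_lp p (fun g => c * x g).
Proof.
move=> [M hM]; exists (`|c| `^ p * M) => s us; rewrite /lp_sum.
under eq_bigr => g _ do rewrite normrM powRM //.
by rewrite -mulr_sumr ler_wpM2l ?powR_ge0 ?hM.
Qed.

Lemma in_lpD x z : in_lp p x -> in_lp p z -> in_lp p (fun g => x g + z g).
Proof.
move=> [M hM] [N hN]; exists (2 `^ p * (M + N)) => s us.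
apply: (@le_trans _ _ (2 `^ p * (lp_sum p x s + lp_sum p z s))); last first.
  by rewrite ler_wpM2l ?powR_ge0 // lerD ?hM ?hN.
rewrite /lp_sum -big_split mulr_sumr /=; apply: ler_sum => g _.
have le_max2 : `|x g + z g| <= 2 * Num.max `|x g| `|z g|.
  apply: (le_trans (ler_normD _ _)).
  by rewrite mulr2n mulrDl mul1r lerD // le_max lexx ?orbT.
apply: (@le_trans _ _ ((2 * Num.max `|x g| `|z g|) `^ p)).
  by apply: ge0_ler_powR; rewrite ?nnegrE ?(ltW p_gt0) // mulr_ge0 // le_max normr_ge0.
rewrite powRM // ?le_max ?normr_ge0 // ler_wpM2l ?powR_ge0 //.
by case: (leP `|x g| `|z g|) => _; rewrite ?lerDr ?lerDl powR_ge0.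
Qed.

Lemma in_lp_ball_lp x : in_lp_ball p x -> in_lp p x.
Proof. by exists 1. Qed.

Lemma in_lp_ball_le1 x g : in_lp_ball p x -> `|x g| <= 1.
Proof.
move=> hx; have := hx [:: g] isT; rewrite /lp_sum big_seq1 => hxg.
rewrite leNgt; apply/negP => xg_gt1.
by have := le_trans (le1r_powR (ltW xg_gt1) p_ge1) hxg; rewrite leNgt xg_gt1.
Qed.

Lemma powR_le_self (t : R) : 0 <= t <= 1 -> t `^ p <= t.
Proof.
case/andP => t0 t1; have [->|tn0] := eqVneq t 0.
  by rewrite powR0 // gt_eqF ?p_gt0.
by apply: ge1r_powR p_ge1; rewrite t1 lt_def tn0 t0.
Qed.

Definition l1_bounded z (L : R) := forall s, uniq s -> \sum_(g <- s) `|z g| <= L.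

Lemma l1_bounded_ge0 z L : l1_bounded z L -> 0 <= L.
Proof. by move=> hz; have := hz [::] isT; rewrite big_nil. Qed.

Lemma l1_bounded_le a b L : l1_bounded a L -> (forall g, `|b g| <= `|a g|) -> l1_bounded b L.
Proof. by move=> ha hba s us; apply: le_trans (ha s us); apply: ler_sum. Qed.

Lemma l1_bounded_mul_sg a (c : G -> R) L :
  l1_bounded a L -> l1_bounded (fun g => a g * Num.sg (c g)) L.
Proof.
move=> ha; apply: (l1_bounded_le ha) => g.
by rewrite normrM ler_piMr // normr_sg; case: (_ != _).
Qed.

Lemma l1_bounded_ball z : l1_bounded z 1 -> in_lp_ball p z.
Proof.
move=> hz s us; apply: le_trans (hz s us); apply: ler_sum => g _.
by apply: powR_le_self; rewrite normr_ge0 /=; have := hz [:: g] isT; rewrite big_seq1.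
Qed.

Lemma l1_bounded_ball_scaled z L (d : R) : l1_bounded z L -> L <= d -> 0 < d ->
  in_lp_ball p (fun g => d^-1 * z g).
Proof.
move=> hz Ld d0; apply: l1_bounded_ball => s us.
under eq_bigr => g _ do rewrite normrM gtr0_norm ?invr_gt0 //.
by rewrite -mulr_sumr ler_pdivrMl // mulr1 (le_trans (hz s us)).
Qed.

Lemma l1_bounded_lp z L : l1_bounded z L -> in_lp p z.
Proof.
move=> hz; have L1_gt0 : 0 < L + 1 by rewrite ltr_wpDl ?(l1_bounded_ge0 hz).
have /(in_lpZ (L + 1)) : in_lp p (fun g => (L + 1)^-1 * z g).
  by apply/in_lp_ball_lp/(l1_bounded_ball_scaled hz); rewrite ?lerDl.
by congr in_lp; apply/funext => g; rewrite mulrA mulfV ?gt_eqF // mul1r.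
Qed.

Lemma l1_norm_ge0 a : (0 <= l1_norm a)%E.
Proof. by apply: ereal_sup_ubound; exists [::] => //; rewrite big_nil. Qed.

Lemma l1_norm_fin_num a : in_l1 a -> l1_norm a \is a fin_num.
Proof. by move=> ha; rewrite ge0_fin_numE ?l1_norm_ge0. Qed.

Lemma l1_bounded_norm a : in_l1 a -> l1_bounded a (fine (l1_norm a)).
Proof.
move=> ha s us; rewrite -lee_fin fineK ?l1_norm_fin_num //.
by apply: ereal_sup_ubound; exists s.
Qed.

Lemma l1_bounded_in_l1 a L : l1_bounded a L -> in_l1 a.
Proof.
move=> ha; apply: le_lt_trans (ltry L).
by apply: ge_ereal_sup => _ [s us <-]; rewrite lee_fin ha.
Qed.

Lemma in_lp_l1_mul_sg a (c : G -> R) : in_l1 a -> in_lp p (fun g => a g * Num.sg (c g)).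
Proof. by move=> /l1_bounded_norm /(l1_bounded_mul_sg c) /l1_bounded_lp. Qed.

Definition zero_on s a : G -> R := fun g => if g \in s then 0 else a g.

Lemma l1_tail_small a (d : R) : in_l1 a -> 0 < d ->
  exists2 s, uniq s & l1_bounded (zero_on s a) d.
Proof.
move=> ha d0; have fin := l1_norm_fin_num ha; rewrite /l1_norm in fin.
have [_ [s us <-] near_sup] := ub_ereal_sup_adherent d0 fin.
exists s => // s' us'.
pose s'_out := [seq g <- s' | g \notin s].
have us_out : uniq (s ++ s'_out).
  rewrite cat_uniq us filter_uniq //= andbT; apply/hasPn => g.
  by rewrite mem_filter => /andP [].
have := l1_bounded_norm ha us_out; rewrite big_cat /=.
rewrite -(fineK fin) -EFinD lte_fin in near_sup.
have -> : \sum_(g <- s') `|zero_on s a g| = \sum_(g <- s'_out) `|a g|.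
  rewrite big_filter [in RHS]big_mkcond /=; apply: eq_bigr => g _.
  by rewrite /zero_on; case: ifP; rewrite ?normr0.
rewrite /l1_norm; lra.
Qed.

Definition basis_vec (h : G) : G -> R := fun g => (g == h)%:R.

Lemma sum_mul_basis_vec (F : G -> R) h s : uniq s ->
  \sum_(g <- s) F g * basis_vec h g = if h \in s then F h else 0.
Proof.
elim: s => [|g s IH]; first by rewrite big_nil.
rewrite /= big_cons in_cons => /andP [gs us]; rewrite IH // /basis_vec.
have [<-|_] := eqVneq g h; first by rewrite mulr1 (negbTE gs) addr0.
by rewrite mulr0 add0r.
Qed.

Lemma l1_bounded_basis_vec h : l1_bounded (basis_vec h) 1.
Proof.
move=> s us; rewrite (eq_bigr (fun g => 1 * basis_vec h g)); last first.
  by move=> g _; rewrite mul1r /basis_vec normr_nat.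
by rewrite sum_mul_basis_vec //; case: ifP.
Qed.

Lemma basis_vec_ball h : in_lp_ball p (basis_vec h).
Proof. exact/l1_bounded_ball/l1_bounded_basis_vec. Qed.

Lemma basis_vec_lp h : in_lp p (basis_vec h).
Proof. exact/in_lp_ball_lp/basis_vec_ball. Qed.

Lemma is_dual_lpZ phi (l : R) : is_dual_lp p phi -> is_dual_lp p (fun x => l * phi x).
Proof.
case=> hadd hZ [C hC] h0; split.
- by move=> x z hx hz; rewrite hadd // mulrDr.
- by move=> c x hx; rewrite hZ // mulrCA.
- by exists (`|l| * C) => x hx; rewrite normrM ler_wpM2l ?hC.
- by move=> x hx; rewrite h0 // mulr0.
Qed.

Lemma is_dual_lp0 phi : is_dual_lp p phi -> phi (fun=> 0) = 0.
Proof.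
case=> _ hZ _ _; have := hZ 0 _ in_lp0.
by under eq_fun do rewrite mul0r; rewrite mul0r.
Qed.

Lemma in_lp_sum s (F : G -> G -> R) :
  (forall h, in_lp p (F h)) -> in_lp p (fun g => \sum_(h <- s) F h g).
Proof.
move=> hF; elim: s => [|h s IH].
  by under eq_fun do rewrite big_nil; exact: in_lp0.
by under eq_fun do rewrite big_cons; exact: in_lpD.
Qed.

Lemma is_dual_lp_sum phi s (F : G -> G -> R) : is_dual_lp p phi ->
  (forall h, in_lp p (F h)) ->
  phi (fun g => \sum_(h <- s) F h g) = \sum_(h <- s) phi (F h).
Proof.
move=> hphi hF; have [hadd _ _ _] := hphi; elim: s => [|h s IH].
  by under eq_fun do rewrite big_nil; rewrite big_nil is_dual_lp0.
have -> : (fun g => \sum_(k <- h :: s) F k g) = (fun g => F h g + \sum_(k <- s) F k g).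
  by apply/funext => g; rewrite big_cons.
by rewrite big_cons hadd ?IH //; exact: in_lp_sum.
Qed.

(* The series [\sum_g a g * |delta_(e_g)|] evaluated at phi: by continuity of
   phi it equals [phi (\sum_g a g * sg (phi e_g) * e_g)], which needs no
   infinite sums. *)
Definition l1_embedding a : ((G -> R) -> R) -> R := fun phi =>
  if `[< is_dual_lp p phi >] then phi (fun g => a g * Num.sg (phi (basis_vec g))) else 0.

Lemma l1_embedding_split phi a s : is_dual_lp p phi -> in_l1 a -> uniq s ->
  l1_embedding a phi =
  \sum_(h <- s) a h * `|phi (basis_vec h)| + l1_embedding (zero_on s a) phi.
Proof.
move=> hphi ha us; rewrite /l1_embedding asboolT //.
have [hadd hZ _ _] := hphi.
pose c h := a h * Num.sg (phi (basis_vec h)).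
have tail_lp : in_lp p (fun g => zero_on s a g * Num.sg (phi (basis_vec g))).
  apply/(l1_bounded_lp (L := fine (l1_norm a)))/l1_bounded_mul_sg.
  apply: (l1_bounded_le (l1_bounded_norm ha)) => g.
  by rewrite /zero_on; case: ifP; rewrite ?normr0.
have -> : (fun g => a g * Num.sg (phi (basis_vec g))) =
  (fun g => \sum_(h <- s) c h * basis_vec h g + zero_on s a g * Num.sg (phi (basis_vec g))).
  apply/funext => g; rewrite (eq_bigr (fun h => c h * basis_vec g h)); last first.
    by move=> h _; rewrite /basis_vec eq_sym.
  by rewrite sum_mul_basis_vec // /zero_on /c; case: ifP; rewrite ?mul0r ?addr0 ?add0r.
have basis_lp h : in_lp p (fun g => c h * basis_vec h g) by exact/in_lpZ/basis_vec_lp.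
move: (is_dual_lp_sum s hphi basis_lp) => /= sum_eq.
rewrite hadd ?sum_eq //; last exact: in_lp_sum.
congr (_ + _); apply: eq_bigr => h _.
rewrite hZ; last exact: basis_vec_lp.
by rewrite /c /= normrEsg mulrA.
Qed.

Lemma admissible_le_l1 xs phi z (d : R) : admissible p xs -> phi \in xs ->
  l1_bounded z d -> 0 < d -> `|phi z| <= d.
Proof.
case=> hdual hsum phi_xs hz d0; have [_ hZ _ _] := hdual phi phi_xs.
have z_ball := l1_bounded_ball_scaled hz (lexx d) d0.
have -> : z = (fun g => d * (d^-1 * z g)).
  by apply/funext => g; rewrite mulrA mulfV ?gt_eqF // mul1r.
rewrite hZ; last exact: in_lp_ball_lp.
rewrite normrM gtr0_norm //; apply: ler_piMr; first exact: ltW.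
apply: le_trans (hsum _ z_ball).
by rewrite (big_rem _ phi_xs) /= lerDl sumr_ge0.
Qed.

Lemma admissible_sum_basis_le xs a s : admissible p xs ->
  \sum_(phi <- xs) `|\sum_(h <- s) a h * `|phi (basis_vec h)| | <= \sum_(h <- s) `|a h|.
Proof.
case=> _ hsum.
apply: (@le_trans _ _ (\sum_(phi <- xs) \sum_(h <- s) `|a h| * `|phi (basis_vec h)|)).
  apply: ler_sum => phi _; apply: le_trans (ler_norm_sum _ _ _) _.
  by apply: ler_sum => h _; rewrite normrM normr_id.
rewrite exchange_big /=; apply: ler_sum => h _.
by rewrite -mulr_sumr; apply: ler_piMr => //; exact/hsum/basis_vec_ball.
Qed.

Lemma l1_embedding_sum_le xs a L : admissible p xs -> l1_bounded a L ->
  \sum_(phi <- xs) `|l1_embedding a phi| <= L.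
Proof.
move=> hxs ha; have a_l1 := l1_bounded_in_l1 ha; have [hdual _] := hxs.
apply/ler_addgt0Pr => e e0.
have n1_gt0 : 0 < (size xs)%:R + 1 :> R by rewrite ltr_wpDl.
pose d := e / ((size xs)%:R + 1).
have d0 : 0 < d by rewrite divr_gt0.
have [s us tail_d] := l1_tail_small a_l1 d0.
rewrite (eq_big_seq (fun phi => `|\sum_(h <- s) a h * `|phi (basis_vec h)|
                                  + l1_embedding (zero_on s a) phi|)); last first.
  by move=> phi hphi; rewrite (l1_embedding_split (hdual _ hphi) a_l1 us).
apply: le_trans (ler_sum _ (fun phi _ => ler_normD _ _)) _.
rewrite big_split /=; apply: lerD.
  exact: le_trans (admissible_sum_basis_le _ _ hxs) (ha s us).
apply: (@le_trans _ _ (\sum_(phi <- xs) d)).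
  rewrite big_seq [leRHS]big_seq; apply: ler_sum => phi hphi.
  rewrite /l1_embedding asboolT; last exact: hdual.
  exact/(admissible_le_l1 hxs hphi _ d0)/l1_bounded_mul_sg.
rewrite big_const_seq count_predT iter_addr_0 -mulr_natr /d mulrAC.
by rewrite ler_pdivrMr // ler_pM2l // lerDl.
Qed.

Lemma fbl_norm_l1_embedding_le a : in_l1 a ->
  (fbl_norm p (l1_embedding a) <= l1_norm a)%E.
Proof.
move=> ha; rewrite -(fineK (l1_norm_fin_num ha)).
apply: ge_ereal_sup => _ [xs hxs <-]; rewrite lee_fin.
exact/(l1_embedding_sum_le hxs)/l1_bounded_norm.
Qed.

Lemma l1_embedding_pos_homog a : pos_homog p (l1_embedding a).
Proof.
move=> phi hphi l l0; rewrite /l1_embedding !asboolT //; last exact: is_dual_lpZ.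
by congr (l * phi _); apply/funext => g; rewrite sgrM gtr0_sg // mul1r.
Qed.

Lemma l1_embedding_in_H0 a : in_l1 a -> in_H0 p (l1_embedding a).
Proof.
move=> ha; split; first exact: l1_embedding_pos_homog.
exact: le_lt_trans (fbl_norm_l1_embedding_le ha) ha.
Qed.

Definition abs_delta h : ((G -> R) -> R) -> R :=
  fun phi => Num.max (delta (basis_vec h) phi) (-1 * delta (basis_vec h) phi).

Lemma abs_deltaE h phi : abs_delta h phi = `|phi (basis_vec h)|.
Proof. by rewrite /abs_delta mulN1r maxrN. Qed.

Section ClosedSublattice.
Variable S : set (((G -> R) -> R) -> R).
Hypothesis hS : closed_sublattice_with_deltas p S.

Lemma sublattice_abs_delta h : S (abs_delta h).
Proof.
have [_ [hdelta _ hZ hmax _]] := hS.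
by apply: hmax; [|apply: hZ]; apply/hdelta/basis_vec_lp.
Qed.

Lemma sublattice_sum (F : G -> ((G -> R) -> R) -> R) s :
  (forall h, S (F h)) -> S (fun phi => \sum_(h <- s) F h phi).
Proof.
have [_ [hdelta hadd hZ _ _]] := hS; move=> hF; elim: s => [|h s IH].
  have := hZ 0 _ (hdelta _ in_lp0).
  by under eq_fun do rewrite mul0r; under [X in _ -> S X]eq_fun do rewrite big_nil.
by under eq_fun do rewrite big_cons; exact: hadd.
Qed.

End ClosedSublattice.

Lemma l1_embedding_FBL a : in_l1 a -> FBL p (l1_embedding a).
Proof.
move=> ha S hS; have [_ [_ _ hZ _ hclosed]] := hS.
apply: hclosed => [|e e0]; first exact: l1_embedding_in_H0.
have [s us tail_e] := l1_tail_small ha e0.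
exists (fun phi => \sum_(h <- s) a h * abs_delta h phi); split.
  by apply: (sublattice_sum hS) => h; apply/hZ/(sublattice_abs_delta hS).
apply: ge_ereal_sup => _ [xs hxs <-]; rewrite lee_fin.
rewrite (eq_big_seq (fun phi => `|l1_embedding (zero_on s a) phi|)).
  exact: l1_embedding_sum_le hxs tail_e.
move=> phi /(hxs.1 _) hphi; under eq_bigr do rewrite abs_deltaE.
by rewrite (l1_embedding_split hphi ha us) addrC addKr.
Qed.

Lemma l1_embeddingD a b : in_l1 a -> in_l1 b ->
  l1_embedding (fun g => a g + b g) = (fun phi => l1_embedding a phi + l1_embedding b phi).
Proof.
move=> ha hb; apply/funext => phi; rewrite /l1_embedding.
case: asboolP => [[hadd _ _ _]|_]; last by rewrite addr0.
rewrite -hadd; [|exact: in_lp_l1_mul_sg..].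
by congr phi; apply/funext => g; rewrite mulrDl.
Qed.

Lemma l1_embeddingZ (c : R) a : in_l1 a ->
  l1_embedding (fun g => c * a g) = (fun phi => c * l1_embedding a phi).
Proof.
move=> ha; apply/funext => phi; rewrite /l1_embedding.
case: asboolP => [[_ hZ _ _]|_]; last by rewrite mulr0.
rewrite -hZ; last exact: in_lp_l1_mul_sg.
by congr phi; apply/funext => g; rewrite mulrA.
Qed.

Definition coord_form s (w : G -> R) : (G -> R) -> R :=
  fun x => if `[< in_lp p x >] then \sum_(g <- s) w g * x g else 0.

Lemma coord_form_dual s w : is_dual_lp p (coord_form s w).
Proof.
split.
- move=> x z hx hz; rewrite /coord_form !asboolT //; last exact: in_lpD.
  by rewrite -big_split; apply: eq_bigr => g _; rewrite mulrDr.
- move=> c x hx; rewrite /coord_form !asboolT //; last exact: in_lpZ.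
  by rewrite mulr_sumr; apply: eq_bigr => g _; rewrite mulrCA.
- exists (\sum_(g <- s) `|w g|) => x hx; rewrite /coord_form asboolT; last exact: in_lp_ball_lp.
  apply: (le_trans (ler_norm_sum _ _ _)); apply: ler_sum => g _.
  by rewrite normrM ler_piMr // in_lp_ball_le1.
- by move=> x hx; rewrite /coord_form asboolF.
Qed.

Lemma coord_form_basis_vec gs w h : uniq gs ->
  coord_form gs w (basis_vec h) = if h \in gs then w h else 0.
Proof. by move=> us; rewrite /coord_form asboolT ?sum_mul_basis_vec //; exact: basis_vec_lp. Qed.

Fixpoint sign_patterns gs : seq (G -> R) :=
  if gs is g :: gs' then
    [seq (fun h => if h == g then 1 else eps h) | eps <- sign_patterns gs'] ++
    [seq (fun h => if h == g then -1 else eps h) | eps <- sign_patterns gs']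
  else [:: fun=> 1].

Lemma size_sign_patterns gs : size (sign_patterns gs) = (2 ^ size gs)%N.
Proof. by elim: gs => [|g gs IH] //=; rewrite size_cat !size_map IH expnS mul2n addnn. Qed.

Lemma sign_patterns_norm gs eps h : eps \in sign_patterns gs -> `|eps h| = 1.
Proof.
elim: gs eps => [|g gs IH] eps /=; first by rewrite inE => /eqP ->; rewrite normr1.
rewrite mem_cat => /orP [] /mapP [eps' /IH eps'_h ->] /=.
  by case: ifP; rewrite ?normr1.
by case: ifP; rewrite ?normrN ?normr1.
Qed.

Lemma sum_sign_patterns gs x (F : R -> R) c : uniq gs ->
  \sum_(eps <- sign_patterns gs) F (c + \sum_(h <- gs) eps h * x h) =
  sum_over_signs F (map x gs) c.
Proof.
elim: gs c => [|g gs IH] c /=; first by rewrite big_seq1 big_nil addr0.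
case/andP => g_gs us; rewrite big_cat !big_map /= -!IH //.
have off_g (v : R) eps : \sum_(h <- gs) (if h == g then v else eps h) * x h =
                         \sum_(h <- gs) eps h * x h.
  by apply: eq_big_seq => h h_gs; case: eqP => // hg; rewrite -hg h_gs in g_gs.
by congr (_ + _); apply: eq_bigr => eps _; rewrite big_cons eqxx off_g ?mul1r ?mulN1r addrA.
Qed.

Definition rademacher_coef gs : R := (2 ^+ (size gs).+1)^-1.

Definition rademacher gs : seq ((G -> R) -> R) :=
  [seq coord_form gs (fun h => rademacher_coef gs * eps h) | eps <- sign_patterns gs].

Lemma rademacher_coef_gt0 gs : 0 < rademacher_coef gs.
Proof. by rewrite invr_gt0 exprn_gt0. Qed.

Lemma rademacher_dual gs phi : phi \in rademacher gs -> is_dual_lp p phi.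
Proof. by case/mapP => eps _ ->; exact: coord_form_dual. Qed.

Lemma l1_embedding_rademacher gs a eps : uniq gs -> in_l1 a -> eps \in sign_patterns gs ->
  l1_embedding a (coord_form gs (fun h => rademacher_coef gs * eps h)) =
  rademacher_coef gs * \sum_(h <- gs) a h.
Proof.
move=> us ha heps; rewrite /l1_embedding asboolT; last exact: coord_form_dual.
rewrite {1}/coord_form asboolT; last exact: in_lp_l1_mul_sg.
rewrite mulr_sumr; apply: eq_big_seq => h h_gs.
rewrite coord_form_basis_vec // h_gs sgrM gtr0_sg ?rademacher_coef_gt0 // mul1r.
have -> : rademacher_coef gs * eps h * (a h * Num.sg (eps h)) =
          rademacher_coef gs * a h * (Num.sg (eps h) * eps h) by ring.
by rewrite -normrEsg (sign_patterns_norm _ heps) mulr1.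
Qed.

Lemma rademacher_sum_l1_embedding gs a : uniq gs -> in_l1 a ->
  \sum_(phi <- rademacher gs) `|l1_embedding a phi| = 2^-1 * `|\sum_(h <- gs) a h|.
Proof.
move=> us ha; rewrite big_map.
rewrite (eq_big_seq (fun=> rademacher_coef gs * `|\sum_(h <- gs) a h|)); last first.
  move=> eps heps; rewrite l1_embedding_rademacher // normrM.
  by rewrite gtr0_norm ?rademacher_coef_gt0.
rewrite big_const_seq count_predT iter_addr_0 size_sign_patterns -mulrnAl.
congr (_ * _); rewrite -mulr_natr natrX /rademacher_coef exprS invfM -mulrA.
by rewrite mulVf ?mulr1 // expf_neq0.
Qed.

Hypothesis p_le2 : p <= 2.

Lemma sqr_le_powR (t : R) : 0 <= t <= 1 -> t ^+ 2 <= t `^ p.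
Proof.
case/andP => t0 t1; have [->|tn0] := eqVneq t 0; first by rewrite expr0n powR_ge0.
by rewrite -powR_mulrn // ger_powR // t1 lt_def tn0 t0.
Qed.

Lemma in_lp_ball_sum_sqr_le1 x s : in_lp_ball p x -> uniq s ->
  \sum_(g <- s) x g ^+ 2 <= 1.
Proof.
move=> hx us; apply: le_trans (hx s us); apply: ler_sum => g _.
by rewrite -real_normK ?num_real // sqr_le_powR // normr_ge0 in_lp_ball_le1.
Qed.

Lemma rademacher_sum_le gs x : uniq gs -> in_lp_ball p x ->
  \sum_(phi <- rademacher gs) `|phi x| <= 2^-1.
Proof.
move=> us hx; rewrite big_map.
have -> : \sum_(eps <- sign_patterns gs)
            `|coord_form gs (fun h => rademacher_coef gs * eps h) x| =
          rademacher_coef gs * sum_over_signs Num.norm (map x gs) 0.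
  rewrite -sum_sign_patterns // mulr_sumr; apply: eq_bigr => eps _.
  rewrite /coord_form asboolT; last exact: in_lp_ball_lp.
  under eq_bigr => h _ do rewrite -mulrA.
  by rewrite add0r -mulr_sumr normrM gtr0_norm ?rademacher_coef_gt0.
have coefE : rademacher_coef gs * 2 ^+ size gs = 2^-1.
  by rewrite /rademacher_coef exprS invfM -mulrA mulVf ?mulr1 // expf_neq0.
rewrite -coefE ler_wpM2l ?(ltW (rademacher_coef_gt0 _)) // -(size_map x).
by apply: sum_over_signs_norm_le; rewrite big_map in_lp_ball_sum_sqr_le1.
Qed.

Lemma admissible_rademacher_cat gs gs' : uniq gs -> uniq gs' ->
  admissible p (rademacher gs ++ rademacher gs').
Proof.
move=> us us'; split=> [phi|x hx].
  by rewrite mem_cat => /orP [] /rademacher_dual.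
rewrite big_cat /=; have := rademacher_sum_le us hx; have := rademacher_sum_le us' hx.
lra.
Qed.

Lemma fbl_norm_l1_embedding_ge_sum a s : in_l1 a -> uniq s ->
  ((2^-1 * \sum_(g <- s) `|a g|)%:E <= fbl_norm p (l1_embedding a))%E.
Proof.
move=> ha us; pose s_pos := [seq g <- s | 0 <= a g]; pose s_neg := [seq g <- s | a g < 0].
have us_pos : uniq s_pos by rewrite filter_uniq.
have us_neg : uniq s_neg by rewrite filter_uniq.
apply: ereal_sup_ubound; exists (rademacher s_pos ++ rademacher s_neg).
  exact: admissible_rademacher_cat.
rewrite big_cat /= !rademacher_sum_l1_embedding // -mulrDr !big_filter.
by rewrite sum_norm_sign_split.
Qed.

Lemma fbl_norm_l1_embedding_ge a : in_l1 a ->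
  ((2^-1)%:E * l1_norm a <= fbl_norm p (l1_embedding a))%E.
Proof.
move=> ha; rewrite lee_pdivrMl //; apply: ge_ereal_sup => _ [s us <-].
by rewrite -lee_pdivrMl // -EFinM; exact: fbl_norm_l1_embedding_ge_sum.
Qed.

End L1EmbeddingInFBL.

Theorem theorem5p4 (R : realType) (G : choiceType) (g0 : G) (p : R)
    (hp1 : 1 < p) (hp2 : p <= 2) :
  exists T : (G -> R) -> (((G -> R) -> R) -> R),
    [/\ (forall a, in_l1 a -> FBL p (T a)),
        (forall a b, in_l1 a -> in_l1 b ->
           T (fun g => a g + b g) = (fun phi => T a phi + T b phi)),
        (forall (c : R) a, in_l1 a -> T (fun g => c * a g) = (fun phi => c * T a phi)) &
        (exists c C : R, [/\ 0 < c, 0 < C &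
           forall a, in_l1 a ->
             (c%:E * l1_norm a <= fbl_norm p (T a))%E /\
             (fbl_norm p (T a) <= C%:E * l1_norm a)%E])].
Proof.
have p_ge1 := ltW hp1.
exists (l1_embedding p); split.
- by move=> a; exact: (l1_embedding_FBL p_ge1).
- by move=> a b; exact: (l1_embeddingD p_ge1).
- by move=> c a; exact: (l1_embeddingZ p_ge1).
exists 2^-1, 1; split => // a ha.
rewrite mul1e; split; first exact: (fbl_norm_l1_embedding_ge p_ge1 hp2).
exact: (fbl_norm_l1_embedding_le p_ge1).
Qed.
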